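(* In the model described in the context, for $f\in\mathbb{R}$ let $X(f)\subseteq\mathbb{R}_+$ be the set of symmetric leader reactions when all followers take forward position $f$. There exist unique $\underline f,\bar f\in\mathbb{R}$ such that $f\in[\underline f,\bar f]$ if and only if $\frac1M(\alpha_x-\triangle C+f)\in X(f)$. Moreover: (1) $y_j\big(f\mathbf1,\frac1M(\alpha_x-\triangle C+f)\mathbf1\big)=0$ for all $f\in[\underline f,\bar f]$; (2) $\bar f-\underline f=O(\alpha_x/M)$.
   Context: Model: $M\ge1$ leaders and $N\ge2$ followers; inverse demand $P(q)=\alpha-\beta q$, $\alpha,\beta>0$; leader marginal cost $C$, follower marginal cost $c$, $c\ge C>0$; follower capacity $k>0$. Leader $i$ produces $x_i\ge0$; follower $j$ takes forward position $f_j\in\mathbb{R}$ and spot production $y_j\in[0,k]$. Given $\mathbf f,\mathbf x$, the spot market is the game among followers where follower $j$ chooses $y_j\in[0,k]$ to maximize $P(\sum_ix_i+\sum_{j'}y_{j'})(y_j-f_j)-cy_j$; its unique Nash equilibrium is $\mathbf y(\mathbf f,\mathbf x)=(y_1(\mathbf f,\mathbf x),\dots,y_N(\mathbf f,\mathbf x))$. Leader $i$'s payoff is $\psi_i=(P(\sum_ix_i+\sum_{j'}y_{j'}(\mathbf f,\mathbf x))-C)x_i$; $\psi_i(\bar x;x\mathbf1,f\mathbf1)$ denotes this payoff when leader $i$ produces $\bar x$, all other leaders produce $x$, and all followers take $f$. $X(f)=\{x\in\mathbb{R}_+:\ \psi_i(x;x\mathbf1,f\mathbf1)\ge\psi_i(\bar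 x;x\mathbf1,f\mathbf1)\ \forall\bar x\in\mathbb{R}_+,\ \forall i\}$. $\alpha_x=(\alpha-C)/\beta$, $\triangle C=(c-C)/\beta$. $O(\cdot)$ is standard Landau notation. *)

From HB Require Import structures.
From Stdlib Require Import ClassicalEpsilon.
From mathcomp Require Import all_boot all_order all_algebra.
From mathcomp Require Import reals.
Set Implicit Arguments. Unset Strict Implicit. Unset Printing Implicit Defensive.
Import Order.TTheory GRing.Theory Num.Theory.
Local Open Scope ring_scope.

Section Model.
Variable R : realType.
Variables (M N : nat) (alpha beta C c k : R).

Definition price (q : R) : R := alpha - beta * q.

Definition upd n (v : 'I_n -> R) (j : 'I_n) (z : R) : 'I_n -> R :=
  fun j' => if j' == j then z else v j'.

Definition follower_payoff (f : 'I_N -> R) (x : 'I_M -> R) (y : 'I_N -> R)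
  (j : 'I_N) : R :=
  price (\sum_(i < M) x i + \sum_(j' < N) y j') * (y j - f j) - c * y j.

Definition is_spot_NE (f : 'I_N -> R) (x : 'I_M -> R) (y : 'I_N -> R) : Prop :=
  forall j : 'I_N, (0 <= y j <= k) /\
    forall z : R, 0 <= z <= k ->
      follower_payoff f x (upd y j z) j <= follower_payoff f x y j.

Definition spot (f : 'I_N -> R) (x : 'I_M -> R) : 'I_N -> R :=
  epsilon (inhabits (fun _ : 'I_N => 0 : R)) (is_spot_NE f x).

Definition leader_payoff (f : 'I_N -> R) (x : 'I_M -> R) (i : 'I_M) : R :=
  (price (\sum_(l < M) x l + \sum_(j < N) spot f x j) - C) * x i.

Definition psi_sym (xb x f : R) (i : 'I_M) : R :=
  leader_payoff (fun _ => f) (upd (fun _ => x) i xb) i.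

Definition in_X (f x : R) : Prop :=
  0 <= x /\ forall (xb : R) (i : 'I_M), 0 <= xb -> psi_sym xb x f i <= psi_sym x x f i.

End Model.

(* At the candidate output x = (ax - dC + f) / M, the forward position f makes
   the followers' Cournot quantity exactly zero, so they stay out and the
   leaders' margin over beta is t = dC - f.  A leader deviating to xb lets the
   followers enter with clamp_[0,k] ((x - xb) / (N + 1)) each, and the
   candidate is an equilibrium iff no deviation pays: upward deviations require
   t <= x, small downward ones x <= (N + 1) t, and downward ones large enough to
   push the followers to capacity a quadratic inequality in the spread x - t.
   Along M x = ax - t each condition is a half-line in t, so the admissible t,
   hence f, form an interval: the point ax when ax <= 0, and otherwise a
   subinterval of [ax / (M (N + 1) + 1), ax / (M + 1)], of length at most ax / M. *)

From HB Require Import structures.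
From Stdlib Require Import ClassicalEpsilon.
From mathcomp Require Import all_boot all_order all_algebra.
From mathcomp Require Import reals ring lra.
Import Order.TTheory GRing.Theory Num.Theory.
Local Open Scope ring_scope.
Set Implicit Arguments. Unset Strict Implicit.

Section Clamp.
Variable R : realFieldType.
Implicit Types k w y z : R.

Definition clamp k w : R := Num.min (Num.max w 0) k.

Definition is_clamp k w y : Prop := [/\ 0 <= y <= k, y < k -> w <= y & 0 < y -> y <= w].

Lemma clamp_le0 k w : 0 <= k -> w <= 0 -> clamp k w = 0.
Proof. by move=> k0 w0; rewrite /clamp max_r // min_l. Qed.

Lemma clamp_id k w : 0 <= w <= k -> clamp k w = w.
Proof. by case/andP=> w0 wk; rewrite /clamp max_l // min_l. Qed.

Lemma clamp_ge k w : 0 <= k -> k <= w -> clamp k w = k.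
Proof. by move=> k0 kw; rewrite /clamp max_l ?min_r // (le_trans k0). Qed.

Lemma is_clampE k w y : 0 <= k -> is_clamp k w y -> y = clamp k w.
Proof.
move=> k0 [/andP[y0 yk] ylt ypos].
have [w0|w0] := lerP w 0.
  by rewrite clamp_le0 //; case: (ltrP 0 y) => [/ypos|] *; lra.
have [wk|wk] := lerP w k.
  rewrite clamp_id ?(ltW w0) ?wk //.
  by case: (ltrP y k) => [/ylt|] *; case: (ltrP 0 y) => [/ypos|] *; lra.
by rewrite clamp_ge ?(ltW wk) //; case: (ltrP y k) => [/ylt|] *; lra.
Qed.

Lemma clamp_is_clamp k w : 0 <= k -> is_clamp k w (clamp k w).
Proof.
move=> k0; have [w0|w0] := lerP w 0.
  by rewrite clamp_le0 //; split; rewrite ?lexx ?ltxx.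
have [wk|wk] := lerP w k.
  by rewrite clamp_id ?(ltW w0) ?wk //; split; rewrite ?lexx ?(ltW w0) ?wk.
by rewrite clamp_ge ?(ltW wk) //; split; rewrite ?lexx ?k0 ?ltxx ?(ltW wk).
Qed.

Lemma is_clamp_uniq k w y1 y2 : is_clamp k w y1 -> is_clamp k w y2 -> y1 = y2.
Proof.
move=> h1 h2; have k0 : 0 <= k by case: h1 => /andP[y0 yk] _ _; apply: le_trans yk.
by rewrite (is_clampE k0 h1) (is_clampE k0 h2).
Qed.

Lemma is_clamp_variational k w y :
  is_clamp k w y <-> 0 <= y <= k /\ forall z, 0 <= z <= k -> (z - y) * (w - z) <= 0.
Proof.
split=> [[/andP[y0 yk] ylt ypos]|[/andP[y0 yk] opt]].
  split=> [|z /andP[z0 zk]]; first by rewrite y0 yk.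
  case: (ltrP y k) => [/ylt wy|]; case: (ltrP 0 y) => [/ypos yw|] => *.
  - have -> : w = y by lra.
    by rewrite -opprB mulNr -expr2 oppr_le0 sqr_ge0.
  - have -> : y = 0 by lra. by rewrite subr0; nra.
  - have -> : y = k by lra. nra.
  - have -> : z = y by lra. by rewrite subrr mul0r.
split; first by rewrite y0 yk.
- move=> ylt; rewrite leNgt; apply/negP => wy.
  have := opt (Num.min ((y + w) / 2) k); rewrite ge_min lexx orbT andbT le_min.
  have -> : 0 <= (y + w) / 2 by lra.
  rewrite (le_trans y0 (ltW ylt)) => /(_ isT).
  by case: (leP ((y + w) / 2) k) => hm h; nra.
- move=> ypos; rewrite leNgt; apply/negP => wy.
  have := opt (Num.max ((y + w) / 2) 0); rewrite le_max lexx orbT /= ge_max.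
  have -> : (y + w) / 2 <= k by lra.
  rewrite (le_trans y0 yk) => /(_ isT).
  by case: (leP ((y + w) / 2) 0) => hm h; nra.
Qed.

Lemma is_clamp_scale k u y l :
  0 < l -> is_clamp k (y + l * (u - y)) y <-> is_clamp k u y.
Proof.
move=> l0; split=> -[yk ylt ypos]; split=> // [/ylt|/ypos] h; nra.
Qed.

End Clamp.

Lemma sum_upd (R : realType) n (v : 'I_n -> R) j z :
  \sum_(i < n) upd v j z i = \sum_(i < n) v i - v j + z.
Proof.
rewrite (bigD1 j) //= [in RHS](bigD1 j) //= /upd eqxx.
by rewrite (eq_bigr v) => [|i /negbTE ->]; first ring.
Qed.

Section SpotMarket.
Variables (R : realType) (M N : nat) (alpha beta c k : R).
Hypothesis beta_gt0 : 0 < beta.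

(* The root, besides [y j], of follower [j]'s gain from deviating. *)
Definition follower_pivot (f : 'I_N -> R) (x : 'I_M -> R) (y : 'I_N -> R) j : R :=
  f j + (price alpha beta (\sum_(i < M) x i + \sum_(i < N) y i) - c) / beta.

Definition follower_cournot (f0 Q : R) : R :=
  (alpha - c - beta * Q + beta * f0) / (beta * (N%:R + 1)).

Lemma follower_payoff_upd f x y j z :
  follower_payoff alpha beta c f x (upd y j z) j - follower_payoff alpha beta c f x y j
  = beta * ((z - y j) * (follower_pivot f x y j - z)).
Proof.
rewrite /follower_payoff /follower_pivot sum_upd /upd eqxx /price.
by field; rewrite gt_eqF.
Qed.

Lemma is_spot_NE_clamp f x y :
  is_spot_NE alpha beta c k f x y <->
  forall j, is_clamp k (follower_pivot f x y j) (y j).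
Proof.
split=> NE j.
- case: (NE j) => yk opt; apply/is_clamp_variational; split=> // z zk.
  by have := opt z zk; rewrite -subr_le0 follower_payoff_upd pmulr_rle0.
- have /is_clamp_variational[yk opt] := NE j; split=> // z zk.
  by rewrite -subr_le0 follower_payoff_upd pmulr_rle0 // opt.
Qed.

Lemma follower_pivot_const y v : (forall i, y i = v) -> forall f0 x j,
  follower_pivot (fun _ => f0) x y j
  = v + (N%:R + 1) * (follower_cournot f0 (\sum_(i < M) x i) - v).
Proof.
move=> yv f0 x j; rewrite /follower_pivot /follower_cournot /price.
rewrite (eq_bigr _ (fun i _ => yv i)) sumr_const card_ord -[v *+ N]mulr_natl.
by field; rewrite !gt_eqF ?ltr_wpDl.
Qed.

Lemma spot_const f0 x v : is_clamp k (follower_cournot f0 (\sum_(i < M) x i)) v ->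
  forall j, spot alpha beta c k (fun _ : 'I_N => f0) x j = v.
Proof.
have N1 : 0 < N%:R + 1 :> R by rewrite ltr_wpDl.
move=> hv; have NE : exists y, is_spot_NE alpha beta c k (fun _ : 'I_N => f0) x y.
  exists (fun _ => v); apply/is_spot_NE_clamp => j.
  by rewrite (@follower_pivot_const (fun _ => v) v) // is_clamp_scale.
have /is_spot_NE_clamp hy := epsilon_spec (inhabits (fun _ => 0)) _ NE.
rewrite /spot => j; set y := epsilon _ _ in hy *.
have yj i : y i = y j by apply: is_clamp_uniq (hy i) (hy j).
have := hy j; rewrite (follower_pivot_const yj) is_clamp_scale // => hyj.
exact: is_clamp_uniq hyj hv.
Qed.

End SpotMarket.

Section Deviation.
Variables (R : realFieldType) (n k : R).

(* Profit (divided by [beta]) of a leader deviating to [xb] when the other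
   leaders produce [x], the leaders' margin over [beta] is [t] and the [n]
   followers' forward positions make them just indifferent to entering at the
   symmetric profile. *)
Definition deviation_profit (x t xb : R) : R :=
  (t + x - xb - n * clamp k ((x - xb) / (n + 1))) * xb.

(* One condition per kind of deviation: upwards, downwards with the followers
   entering below capacity, and downwards with the followers at capacity. *)
Definition deviation_free (x t : R) : Prop :=
  [/\ t <= x, 0 < x -> x <= (n + 1) * t
    & 0 < x -> (n + 2) * k < x - t -> (t + x - n * k) ^+ 2 <= 4 * t * x].

Lemma deviation_profit_upward x t xb : 0 <= n -> 0 <= k ->
  x <= xb -> deviation_profit x t xb = (t + x - xb) * xb.
Proof.
move=> n0 k0 xxb; rewrite /deviation_profit clamp_le0 ?mulr0 ?subr0 //.
by rewrite ler_pdivrMr ?mul0r ?subr_le0 // ltr_wpDl.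
Qed.

Lemma deviation_profit_entry x t xb : 0 <= n -> 0 <= x - xb <= (n + 1) * k ->
  deviation_profit x t xb = (t + (x - xb) / (n + 1)) * xb.
Proof.
move=> n0 /andP[d0 dk]; have n1 : 0 < n + 1 by rewrite ltr_wpDl.
rewrite /deviation_profit clamp_id; first by congr (_ * _); field; rewrite gt_eqF.
by rewrite divr_ge0 ?(ltW n1) //= ler_pdivrMr // mulrC.
Qed.

Lemma deviation_profit_capacity x t xb : 0 <= n -> 0 <= k -> (n + 1) * k <= x - xb ->
  deviation_profit x t xb = (t + x - xb - n * k) * xb.
Proof.
move=> n0 k0 kd; rewrite /deviation_profit clamp_ge //.
by rewrite ler_pdivlMr ?ltr_wpDl // mulrC.
Qed.

Lemma deviation_profit_self x t : 0 <= n -> 0 <= k -> deviation_profit x t x = t * x.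
Proof. by move=> n0 k0; rewrite deviation_profit_upward // addrK. Qed.

Definition no_profitable_deviation (x t : R) : Prop :=
  forall xb, 0 <= xb -> deviation_profit x t xb <= t * x.

Lemma no_deviation_upward x t : 0 <= n -> 0 <= k -> 0 <= x ->
  no_profitable_deviation x t -> t <= x.
Proof.
move=> n0 k0 x0 no_gain; rewrite leNgt; apply/negP => xt.
have xb0 : 0 <= (t + x) / 2 by lra.
have := no_gain _ xb0; rewrite deviation_profit_upward //; last by lra.
by nra.
Qed.

Lemma no_deviation_entry x t : 0 <= n -> 0 < k -> 0 < x ->
  no_profitable_deviation x t -> x <= (n + 1) * t.
Proof.
move=> n0 k0 x0 no_gain; rewrite leNgt; apply/negP => xt.
have n1 : 0 < n + 1 by rewrite ltr_wpDl.
(* a small cut [e] lets the followers enter below capacity *)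
pose e := Num.min (Num.min x ((n + 1) * k)) ((x - (n + 1) * t) / 2).
have e0 : 0 < e by rewrite !lt_min x0 mulr_gt0 //= divr_gt0 // subr_gt0.
have [ex ek et] : [/\ e <= x, e <= (n + 1) * k & e <= (x - (n + 1) * t) / 2].
  by rewrite !ge_min !lexx !orbT.
have xb0 : 0 <= x - e by rewrite subr_ge0.
have := no_gain _ xb0.
rewrite deviation_profit_entry //; last by rewrite opprB addrC subrK ltW.
have -> : x - (x - e) = e by rewrite opprB addrC subrK.
have gain : (t + e / (n + 1)) * (x - e) - t * x = e / (n + 1) * (x - (n + 1) * t - e).
  by field; rewrite gt_eqF.
have : 0 < e / (n + 1) by rewrite divr_gt0.
by nra.
Qed.

Lemma no_deviation_capacity x t : 0 <= n -> 0 < k -> 0 < x ->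
  no_profitable_deviation x t ->
  (n + 2) * k < x - t -> (t + x - n * k) ^+ 2 <= 4 * t * x.
Proof.
move=> n0 k0 x0 no_gain spread; have n1 : 0 < n + 1 by rewrite ltr_wpDl.
have xt := no_deviation_entry n0 k0 x0 no_gain.
have t0 : 0 < t by rewrite ltNge; apply/negP => /(mulr_ge0_le0 (ltW n1)); lra.
have xb0 : 0 <= (t + x - n * k) / 2 by lra.
have := no_gain _ xb0; rewrite deviation_profit_capacity ?(ltW k0) //; last by lra.
have -> : (t + x - (t + x - n * k) / 2 - n * k) * ((t + x - n * k) / 2)
  = (t + x - n * k) ^+ 2 / 4 by field.
by lra.
Qed.

Lemma deviation_free_no_deviation x t : 0 <= n -> 0 < k ->
  deviation_free x t -> no_profitable_deviation x t.
Proof.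
move=> n0 k0 [tx entry capacity] xb xb0; have n1 : 0 < n + 1 by rewrite ltr_wpDl.
have [xxb|xbx] := lerP x xb; first by rewrite deviation_profit_upward ?(ltW k0) //; nra.
have x0 : 0 < x by lra.
have := entry x0; have [mid|cap] := lerP (x - xb) ((n + 1) * k) => entry'.
  rewrite deviation_profit_entry //; last by rewrite mid subr_ge0 ltW.
  rewrite -subr_ge0; have -> : t * x - (t + (x - xb) / (n + 1)) * xb
    = (x - xb) / (n + 1) * ((n + 1) * t - xb) by field; rewrite gt_eqF.
  have : 0 < (x - xb) / (n + 1) by rewrite divr_gt0 // subr_gt0.
  by nra.
rewrite deviation_profit_capacity ?(ltW k0) ?(ltW cap) // -subr_ge0.
have [spread|spread] := ltrP ((n + 2) * k) (x - t).
  by have := capacity x0 spread; have := sqr_ge0 (t + x - n * k - 2 * xb); nra.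
(* the followers already sell [k] each: the loss splits into three nonnegative terms *)
have -> : t * x - (t + x - xb - n * k) * xb = (x - (n + 1) * k - xb) * (t + k - xb)
  + k * ((n + 1) * t - x) + (n + 1) * k * k by ring.
have := mulr_ge0 (ltW k0) (ltW n1).
by nra.
Qed.

Lemma no_profitable_deviationP x t : 0 <= n -> 0 < k -> 0 <= x ->
  no_profitable_deviation x t <-> deviation_free x t.
Proof.
move=> n0 k0 x0; split=> [H|]; last exact: deviation_free_no_deviation.
split=> [|x_gt0|x_gt0]; first exact: no_deviation_upward n0 (ltW k0) x0 H.
  exact: no_deviation_entry n0 k0 x_gt0 H.
exact: no_deviation_capacity n0 k0 x_gt0 H.
Qed.

End Deviation.

Section Leader.
Variables (R : realType) (M N : nat) (alpha beta C c k : R).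
Hypotheses (beta_gt0 : 0 < beta) (k_gt0 : 0 < k).

Lemma psi_sym_clamp xb x f (i : 'I_M) :
  psi_sym N alpha beta C c k xb x f i =
  (price alpha beta (M%:R * x - x + xb + N%:R *
     clamp k (follower_cournot N alpha beta c f (M%:R * x - x + xb))) - C) * xb.
Proof.
have sumx : \sum_(l < M) upd (fun _ => x) i xb l = M%:R * x - x + xb.
  by rewrite sum_upd sumr_const card_ord -[x *+ M]mulr_natl.
have spotE j : spot alpha beta c k (fun _ : 'I_N => f) (upd (fun _ => x) i xb) j
    = clamp k (follower_cournot N alpha beta c f (M%:R * x - x + xb)).
  by apply: spot_const => //; rewrite sumx; apply/clamp_is_clamp/ltW.
rewrite /psi_sym /leader_payoff sumx (eq_bigr _ (fun j _ => spotE j)).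
by rewrite sumr_const card_ord -[_ *+ N]mulr_natl /upd eqxx.
Qed.

Lemma follower_cournot_cand f x xb :
  M%:R * x = (alpha - C) / beta - (c - C) / beta + f ->
  follower_cournot N alpha beta c f (M%:R * x - x + xb) = (x - xb) / (N%:R + 1).
Proof.
move=> Mx; rewrite /follower_cournot -addrA addrC mulrDr Mx.
by field; rewrite !gt_eqF ?ltr_wpDl.
Qed.

Lemma psi_sym_cand f x xb (i : 'I_M) :
  M%:R * x = (alpha - C) / beta - (c - C) / beta + f ->
  psi_sym N alpha beta C c k xb x f i
  = beta * deviation_profit N%:R k x ((c - C) / beta - f) xb.
Proof.
move=> Mx; rewrite psi_sym_clamp follower_cournot_cand // /deviation_profit /price.
by rewrite Mx; field; rewrite gt_eqF.
Qed.

Lemma in_X_cand f x : (0 < M)%N ->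
  M%:R * x = (alpha - C) / beta - (c - C) / beta + f ->
  in_X M N alpha beta C c k f x <->
  0 <= x /\ deviation_free N%:R k x ((c - C) / beta - f).
Proof.
move=> M0 Mx; have N0 : 0 <= N%:R :> R by [].
have gain xb (i : 'I_M) :
    (psi_sym N alpha beta C c k xb x f i <= psi_sym N alpha beta C c k x x f i)
    = (deviation_profit N%:R k x ((c - C) / beta - f) xb <= ((c - C) / beta - f) * x).
  by rewrite !psi_sym_cand // ler_pM2l // deviation_profit_self // ltW.
split=> [[x0 H]|[x0 /(deviation_free_no_deviation N0 k_gt0) H]]; split=> //.
  by apply/no_profitable_deviationP => // xb xb0; rewrite -(gain xb (Ordinal M0)) H.
by move=> xb i xb0; rewrite gain H.
Qed.

Lemma spot_cand f x j :
  M%:R * x = (alpha - C) / beta - (c - C) / beta + f ->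
  spot alpha beta c k (fun _ : 'I_N => f) (fun _ : 'I_M => x) j = 0.
Proof.
move=> Mx; apply: spot_const => //.
rewrite sumr_const card_ord -mulr_natl -[M%:R * x](subrK x).
rewrite follower_cournot_cand // subrr mul0r.
by split; rewrite ?lexx ?ltW ?ltxx.
Qed.

End Leader.

Lemma ler_sqrtr_sqr (R : rcfType) (s D : R) :
  0 < s -> (s <= Num.sqrt D) = (s ^+ 2 <= D).
Proof.
move=> s0; have [D0|D0] := lerP 0 D.
  by rewrite -[s ^+ 2 <= D]ler_sqrt // sqrtr_sqr ger0_norm // ltW.
rewrite ltr0_sqrtr // leNgt s0; apply/esym/negbTE; rewrite -ltNge.
exact: lt_le_trans D0 (sqr_ge0 s).
Qed.

Section Spread.
Variables (R : rcfType) (n k : R).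

(* Along [m * x = a - t], the capacity condition of [deviation_free] is a convex
   quadratic inequality in the spread [x - t]; [spread_root] is its larger root. *)
Definition spread_disc (a m : R) : R :=
  (n * k * (m - 1)) ^+ 2 + 4 * n * k * a * (m + 1) - (n * k * (m + 1)) ^+ 2.

Definition spread_root (a m : R) : R :=
  (Num.sqrt (spread_disc a m) - n * k * (m - 1)) / (m + 1).

Definition spread_bound (a m : R) : R := Num.max ((n + 2) * k) (spread_root a m).

Lemma capacity_cond_root a m x t : 1 <= m -> 0 <= n -> 0 <= k ->
  m * x = a - t -> 0 < x - t ->
  ((t + x - n * k) ^+ 2 <= 4 * t * x) = (x - t <= spread_root a m).
Proof.
move=> m1 n0 k0 Mx s0; have m1_gt0 : 0 < m + 1 by lra.
have nk0 : 0 <= n * k * (m - 1) by rewrite !mulr_ge0 // subr_ge0.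
have quad : (m + 1) ^+ 2 * ((t + x - n * k) ^+ 2 - 4 * t * x)
    = ((m + 1) * (x - t) + n * k * (m - 1)) ^+ 2 - spread_disc a m.
  by rewrite /spread_disc (_ : a = m * x + t); [ring | lra].
rewrite /spread_root ler_pdivlMr // lerBrDr [_ * (m + 1)]mulrC.
rewrite ler_sqrtr_sqr; last exact: ltr_wpDr nk0 (mulr_gt0 m1_gt0 s0).
by rewrite -subr_le0 -(pmulr_rle0 _ (exprn_gt0 2 m1_gt0)) quad subr_le0.
Qed.

Lemma capacity_cond_spread a m x t : 1 <= m -> 0 <= n -> 0 < k ->
  m * x = a - t -> t <= x ->
  ((n + 2) * k < x - t -> (t + x - n * k) ^+ 2 <= 4 * t * x) <->
  x - t <= spread_bound a m.
Proof.
move=> m1 n0 k0 Mx tx; rewrite /spread_bound le_max.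
have [spread|spread] := lerP (x - t) ((n + 2) * k).
  by split=> // _ /(lt_le_trans ^~ spread); rewrite ltxx.
have s0 : 0 < x - t by apply: le_lt_trans spread; rewrite mulr_ge0 ?(ltW k0) ?addr_ge0.
by rewrite -(capacity_cond_root m1 n0 (ltW k0) Mx s0); split=> [/(_ isT)|].
Qed.

Lemma deviation_free_itv_nonpos a m x t : 0 < m -> 0 <= n -> a <= 0 -> m * x = a - t ->
  0 <= x /\ deviation_free n k x t <-> t = a.
Proof.
move=> m0 n0 a0 Mx; split=> [[x0 [tx entry _]]|ta].
  have [x_gt0|x_le0] := ltrP 0 x.
    have t_lt0 : t < 0 by nra.
    by have := entry x_gt0; nra.
  have x00 : x = 0 by lra.
  by rewrite x00 mulr0 in Mx; lra.
have /eqP : m * x = 0 by rewrite Mx ta subrr.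
rewrite mulf_eq0 gt_eqF //= => /eqP x00.
by rewrite x00 ta; split=> //; split=> //; rewrite ltxx.
Qed.

Lemma deviation_free_itv_pos a m x t : 1 <= m -> 0 <= n -> 0 < k -> 0 < a ->
  m * x = a - t ->
  0 <= x /\ deviation_free n k x t <->
  Num.max (a / (m * (n + 1) + 1)) ((a - m * spread_bound a m) / (m + 1)) <= t
    <= a / (m + 1).
Proof.
move=> m1 n0 k0 a0 Mx; have m0 : 0 < m by lra.
have m1_gt0 : 0 < m + 1 by lra.
have mn1_gt0 : 0 < m * (n + 1) + 1 by rewrite ltr_wpDl // mulr_ge0 ?(ltW m0) ?addr_ge0.
rewrite ge_max !ler_pdivrMr // ler_pdivlMr //.
have le_x : (t * (m + 1) <= a) = (t <= x) by apply/idP/idP; nra.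
have entry : (a <= t * (m * (n + 1) + 1)) = (x <= (n + 1) * t) by apply/idP/idP; nra.
have cap : (a - m * spread_bound a m <= t * (m + 1)) = (x - t <= spread_bound a m).
  by apply/idP/idP; nra.
rewrite le_x entry cap; split=> [[x0 [tx ent cp]]|/andP[/andP[ent cp] tx]].
  have x_gt0 : 0 < x by rewrite lt_neqAle x0 andbT; apply: contraTneq tx => <-; nra.
  by rewrite tx ent // andbT; apply/(capacity_cond_spread m1 n0 k0 Mx tx)/cp.
have x_gt0 : 0 < x by nra.
split; first exact: ltW.
by split=> // _; apply/(capacity_cond_spread m1 n0 k0 Mx tx).
Qed.

Lemma deviation_free_itv a m : 1 <= m -> 0 <= n -> 0 < k ->
  exists lo hi, [/\ lo <= hi,
    forall x t, m * x = a - t -> (lo <= t <= hi <-> 0 <= x /\ deviation_free n k x t)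
    & hi - lo <= `|a / m|].
Proof.
move=> m1 n0 k0; have m0 : 0 < m by lra.
have [a0|a0] := lerP a 0.
  exists a, a; split; rewrite ?subrr //.
  move=> x t Mx; rewrite (deviation_free_itv_nonpos m0 n0 a0 Mx).
  by split=> [/andP[]|->]; [lra | rewrite lexx].
set L1 := a / (m * (n + 1) + 1); set L2 := (a - m * spread_bound a m) / (m + 1).
have m1_gt0 : 0 < m + 1 by lra.
have mn1_gt0 : 0 < m * (n + 1) + 1 by rewrite ltr_wpDl // mulr_ge0 ?(ltW m0) ?addr_ge0.
have L1_hi : L1 <= a / (m + 1).
  by rewrite ler_pM2l // lef_pV2 ?posrE // lerD2r ler_peMr ?(ltW m0) // lerDr.
have L1_gt0 : 0 < L1 by rewrite divr_gt0.
exists (Num.max L1 L2), (a / (m + 1)); split.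
- rewrite ge_max L1_hi ler_pM2r ?invr_gt0 // gerBl mulr_ge0 ?(ltW m0) //.
  by rewrite le_max mulr_ge0 ?(ltW k0) ?addr_ge0.
- by move=> x t Mx; rewrite (deviation_free_itv_pos m1 n0 k0 a0 Mx).
- have hi_am : a / (m + 1) <= a / m by rewrite ler_pM2l // lef_pV2 ?posrE // lerDl.
  have L1_lo : L1 <= Num.max L1 L2 by rewrite le_max lexx.
  by rewrite ger0_norm ?divr_ge0 ?(ltW a0) ?(ltW m0) //; lra.
Qed.

End Spread.

Lemma itv_bounds_uniq d (T : porderType d) (P : T -> Prop) (a b a' b' : T) :
  (a <= b)%O -> (forall f, (a <= f <= b)%O <-> P f) ->
  (forall f, (a' <= f <= b')%O <-> P f) -> a' = a /\ b' = b.
Proof.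
move=> ab H H'.
have /H' /andP[a'a ab'] : P a by apply/H; rewrite lexx ab.
have /H' /andP[a'b bb'] : P b by apply/H; rewrite lexx ab.
have /H /andP[aa' _] : P a' by apply/H'; rewrite lexx (le_trans a'a ab').
have /H /andP[_ b'b] : P b' by apply/H'; rewrite lexx (le_trans a'a ab').
by split; apply: le_anti; rewrite ?a'a ?aa' ?b'b ?bb'.
Qed.

Theorem lemma2 (R : realType) :
  exists K : R, 0 < K /\
  forall (M N : nat) (alpha beta C c k : R),
    (1 <= M)%N -> (2 <= N)%N ->
    0 < alpha -> 0 < beta -> 0 < C -> C <= c -> 0 < k ->
    let ax := (alpha - C) / beta in
    let dC := (c - C) / beta in
    let cand := fun f : R => (ax - dC + f) / M%:R in
    exists fl fh : R,
      ((forall f : R, fl <= f <= fh <-> @in_X R M N alpha beta C c k f (cand f)) /\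
       (forall fl' fh' : R,
          (forall f : R, fl' <= f <= fh' <-> @in_X R M N alpha beta C c k f (cand f)) ->
          fl' = fl /\ fh' = fh)) /\
      (forall f : R, fl <= f <= fh ->
         forall j : 'I_N,
           @spot R M N alpha beta c k (fun _ => f) (fun _ => cand f) j = 0) /\
      `|fh - fl| <= K * `|ax / M%:R|.
Proof.
exists 1; split=> [|M N alpha beta C c k M1 _ _ beta0 _ _ k0 ax dC cand].
  exact: ltr01.
have m1 : 1 <= M%:R :> R by rewrite ler1n.
have [lo [hi [lohi Hitv Hbound]]] := deviation_free_itv ax m1 (ler0n R N) k0.
have Mcand f : M%:R * cand f = ax - dC + f.
  by rewrite /cand mulrC divfK // pnatr_eq0 -lt0n.
have X f : dC - hi <= f <= dC - lo <-> in_X M N alpha beta C c k f (cand f).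
  rewrite (in_X_cand N beta0 k0 M1 (Mcand f)) -/dC -(Hitv _ _ (etrans (Mcand f) _)).
    by split=> /andP[? ?]; apply/andP; split; lra.
  by rewrite opprB addrA addrAC.
exists (dC - hi), (dC - lo); split; [split=> // fl fh H|split].
- by apply: itv_bounds_uniq X H; lra.
- by move=> f _ j; exact: (spot_cand beta0 k0 j (Mcand f)).
- by rewrite mul1r opprB addrC addrA subrK ger0_norm ?subr_ge0.
Qed.
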